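(* Let $n\ge1$, $m\ge2$, $k\ge1$, and ${\bf u}_1,\ldots,{\bf u}_k\in\mathbb{R}^n$. For each $i$ let ${\bf U}_i({\bf x})$ be a symmetric $m\times m$ matrix whose entries are affine-linear forms in ${\bf x}=(x_1,\ldots,x_n)$, which has rank $2$ and whose two nonzero eigenvalues are $\pm\|{\bf u}_i-{\bf x}\|$. Then the polynomial $p^n_k({\bf x})=\prod_{\sigma\in\{0,1\}^k}\bigl(d-\sum_{i}(-1)^{\sigma_i}\|{\bf u}_i-{\bf x}\|\bigr)$ divides $$\det\bigl(d\cdot I_{m^k}+{\bf U}_1({\bf x})\oplus{\bf U}_2({\bf x})\oplus\cdots\oplus{\bf U}_k({\bf x})\bigr)$$ in the polynomial ring $\mathbb{R}[d,x_1,\ldots,x_n]$. In particular this holds for $m=n+1$ and ${\bf U}_i({\bf x})$ the matrix whose first row is $(0,x_1-u_{i1},\ldots,x_n-u_{in})$, whose first column is its transpose, and whose other entries are $0$.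
   Context: The tensor sum of an $m\times m$ matrix $A$ and an $n\times n$ matrix $B$ is $A\oplus B:=A\otimes I_n+I_m\otimes B$ (associative). *)

From HB Require Import structures.
From mathcomp Require Import all_boot all_order all_algebra.
From mathcomp Require Import mxtens mpoly.
Set Implicit Arguments. Unset Strict Implicit. Unset Printing Implicit Defensive.
Import Order.TTheory GRing.Theory Num.Theory.
Local Open Scope ring_scope.

Section Defs.
Variable R : rcfType.

Definition edist n (u x : 'rV[R]_n) : R :=
  Num.sqrt (\sum_(j < n) (u 0 j - x 0 j) ^+ 2).

Definition tenssum p q (A : 'M[R]_p) (B : 'M[R]_q) : 'M[R]_(p * q) :=
  A *t (1%:M : 'M[R]_q) + (1%:M : 'M[R]_p) *t B.

(* U_1 (+) (U_2 (+) ( ... (+) U_k)), of size m^k; the empty tensor sum is the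
   1x1 zero matrix, the neutral element of (+). *)
Fixpoint tsum m k : ('I_k -> 'M[R]_m) -> 'M[R]_(m ^ k) :=
  match k return ('I_k -> 'M[R]_m) -> 'M[R]_(m ^ k) with
  | 0 => fun _ => castmx (esym (expn0 m), esym (expn0 m)) (0 : 'M[R]_1)
  | k'.+1 => fun U =>
      castmx (esym (expnS m k'), esym (expnS m k'))
        (tenssum (U ord0) (@tsum m k' (fun i => U (lift ord0 i))))
  end.

Definition pnk n k (u : 'I_k -> 'rV[R]_n) (d : R) (x : 'rV[R]_n) : R :=
  \prod_(s : {ffun 'I_k -> bool})
     (d - \sum_(i < k) (-1) ^+ (s i) * edist (u i) x).

(* evaluation point (d, x_1, ..., x_n) for polynomials in R[d, x_1..x_n];
   variable 0 is d, variable j.+1 is x_{j+1}. *)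
Definition dx_pt n (d : R) (x : 'rV[R]_n) : 'I_n.+1 -> R :=
  fun j => match unlift ord0 j with None => d | Some j' => x 0 j' end.

(* "p^n_k divides det(d I + U_1(x) (+) ... (+) U_k(x)) in R[d, x_1..x_n]":
   p^n_k is (given by) a polynomial P, and the determinant is (given by)
   P * Q for some polynomial Q. *)
Definition pnk_divides_det n m k (u : 'I_k -> 'rV[R]_n)
    (U : 'I_k -> 'rV[R]_n -> 'M[R]_m) : Prop :=
  exists P Q : {mpoly R[n.+1]},
    (forall d x, P.@[dx_pt d x] = pnk u d x) /\
    (forall d x, (P * Q).@[dx_pt d x]
                 = \det (d%:M + tsum (fun i => U i x))).

Definition affmx n m (U0 : 'M[R]_m) (C : 'I_n -> 'M[R]_m) (x : 'rV[R]_n)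
  : 'M[R]_m := U0 + \sum_(j < n) x 0 j *: C j.

Definition arrowmx n (u x : 'rV[R]_n) : 'M[R]_n.+1 :=
  \matrix_(a, b) match unlift ord0 a, unlift ord0 b with
                 | None, Some j => x 0 j - u 0 j
                 | Some j, None => x 0 j - u 0 j
                 | _, _ => 0
                 end.
End Defs.

From Pilot Require Import Defs.
From mathcomp Require Import all_boot all_order all_algebra.
From mathcomp Require Import mxtens mpoly.
From mathcomp Require Import ring zify.
Import GRing.Theory Num.Theory Pdiv.CommonRing.
Set Implicit Arguments. Unset Strict Implicit. Unset Printing Implicit Defensive.
Local Open Scope ring_scope.

(* If U is similar to a triangular matrix with diagonal f and V to one with
   diagonal g, then U (+) V is similar to a triangular matrix whose diagonal
   lists all sums f a + g b.  So when each U_i(x) is triangularizable with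
   +-||u_i - x|| at two distinct diagonal places, the characteristic polynomial
   of -(U_1 (+) ... (+) U_k) contains every factor d - sum_i (-1)^(s_i) ||u_i - x||
   of p^n_k.  For x <> u_i, rank <= 2 and the eigenvalues +-r, r <> 0, make
   U_i(x) diagonalizable with spectrum {r, -r, 0}, so U_i(x)^3 = r^2 U_i(x);
   on a line through u_i this is a polynomial identity, whence U_i(u_i)^3 = 0
   and, U_i(u_i) being symmetric, U_i(u_i) = 0.
   To turn pointwise divisibility into divisibility of polynomials, p^n_k is
   realized as the characteristic polynomial of the tensor sum of the matrices
   [[0, s_i], [1, 0]] with s_i = ||u_i - x||^2, a monic polynomial in d over
   R[x]; the remainder of the determinant modulo it vanishes at every x. *)

(* [tenssum] and [tsum] of Defs over an arbitrary ring, for matrices with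
   polynomial entries. *)
Section RingTensorSum.
Variable T : pzRingType.

Definition tenssum_ring p q (A : 'M[T]_p) (B : 'M[T]_q) : 'M[T]_(p * q) :=
  A *t (1%:M : 'M[T]_q) + (1%:M : 'M[T]_p) *t B.

Fixpoint tsum_ring m k : ('I_k -> 'M[T]_m) -> 'M[T]_(m ^ k) :=
  match k return ('I_k -> 'M[T]_m) -> 'M[T]_(m ^ k) with
  | 0 => fun _ => castmx (esym (expn0 m), esym (expn0 m)) (0 : 'M[T]_1)
  | k'.+1 => fun U =>
      castmx (esym (expnS m k'), esym (expnS m k'))
        (tenssum_ring (U ord0) (@tsum_ring m k' (fun i => U (lift ord0 i))))
  end.

Lemma eq_tsum_ring m k (A B : 'I_k -> 'M[T]_m) : A =1 B -> tsum_ring A = tsum_ring B.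
Proof.
elim: k A B => [|k IHk] A B eqAB //=.
by rewrite eqAB (IHk (fun i => A (lift ord0 i)) (fun i => B (lift ord0 i))).
Qed.

End RingTensorSum.

Lemma map_tsum_ring (aT rT : pzRingType) (f : {rmorphism aT -> rT}) m k
    (A : 'I_k -> 'M[aT]_m) :
  map_mx f (tsum_ring A) = tsum_ring (fun i => map_mx f (A i)).
Proof.
elim: k A => [|k IHk] A /=; first by rewrite map_castmx map_mx0.
by rewrite map_castmx /tenssum_ring map_mxD !map_mxT !map_mx1 IHk.
Qed.

Lemma tsum_ringE (R : rcfType) m k (A : 'I_k -> 'M[R]_m) : tsum_ring A = tsum A.
Proof. by elim: k A => [|k IHk] A //=; rewrite IHk. Qed.

Section ReindexBig.
Variables (M : Type) (idx : M) (op : Monoid.com_law idx).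

Lemma big_cast_ord a b (e : a = b) (F : 'I_b -> M) :
  \big[op/idx]_(j < b) F j = \big[op/idx]_(j < a) F (cast_ord e j).
Proof. by case: b / e F => F; apply: eq_bigr => j _; rewrite cast_ord_id. Qed.

Lemma big_mxtens_index p q (F : 'I_(p * q) -> M) :
  \big[op/idx]_(j < p * q) F j
  = \big[op/idx]_(a < p) \big[op/idx]_(b < q) F (mxtens_index (a, b)).
Proof.
rewrite pair_big (reindex (@mxtens_index p q)) /=; last first.
  by exists (@mxtens_unindex p q) => x _; [apply: mxtens_indexK | apply: mxtens_unindexK].
by apply: eq_bigr => -[a b].
Qed.

Definition ffun_cons m k (a : 'I_m) (t : {ffun 'I_k -> 'I_m}) : {ffun 'I_k.+1 -> 'I_m} :=
  [ffun i => if unlift ord0 i is Some i' then t i' else a].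

Lemma big_ffun_cons m k (F : {ffun 'I_k.+1 -> 'I_m} -> M) :
  \big[op/idx]_(t : {ffun 'I_k.+1 -> 'I_m}) F t
  = \big[op/idx]_(a < m) \big[op/idx]_(t : {ffun 'I_k -> 'I_m}) F (ffun_cons a t).
Proof.
rewrite pair_big (reindex (fun p => ffun_cons p.1 p.2)) /=; last first.
  exists (fun t : {ffun 'I_k.+1 -> 'I_m} => (t ord0, [ffun i => t (lift ord0 i)])).
    move=> [a t] _ /=; rewrite /ffun_cons ffunE unlift_none; congr (_, _).
    by apply/ffunP => i; rewrite !ffunE liftK.
  move=> t _; apply/ffunP => i; rewrite /ffun_cons ffunE.
  by case: unliftP => [j ->|->]; rewrite ?ffunE.
by apply: eq_bigr => -[a t].
Qed.

End ReindexBig.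

Section Trigonalization.
Variable F : fieldType.

Definition trig_diag N (A : 'M[F]_N) (d : 'I_N -> F) :=
  exists P Pi : 'M[F]_N,
    [/\ Pi *m P = 1%:M, is_trig_mx (P *m A *m Pi) & forall i, (P *m A *m Pi) i i = d i].

Lemma char_poly_conj N (A P Pi : 'M[F]_N) : Pi *m P = 1%:M ->
  char_poly (P *m A *m Pi) = char_poly A.
Proof.
move=> PiP; have PPi := mulmx1C PiP; rewrite /char_poly.
have -> : char_poly_mx (P *m A *m Pi) =
    map_mx polyC P *m char_poly_mx A *m map_mx polyC Pi.
  rewrite /char_poly_mx mulmxBr mulmxBl -!map_mxM; congr (_ - _).
  by rewrite mul_mx_scalar -scalemxAl -map_mxM PPi map_mx1 scalemx1.
by rewrite !det_mulmx mulrAC -det_mulmx -map_mxM PPi map_mx1 det1 mul1r.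
Qed.

Lemma char_poly_trig_diag N (A : 'M[F]_N) d : trig_diag A d ->
  char_poly A = \prod_(i < N) ('X - (d i)%:P).
Proof.
case=> P [Pi [PiP trig diag]].
rewrite -(char_poly_conj A PiP) char_poly_trig //.
by apply: eq_bigr => i _; rewrite diag.
Qed.

Lemma trig_diagN N (A : 'M[F]_N) d : trig_diag A d -> trig_diag (- A) (fun i => - d i).
Proof.
case=> P [Pi [PiP /is_trig_mxP trig diag]]; exists P, Pi; split => //.
  by apply/is_trig_mxP => i j ij; rewrite mulmxN mulNmx mxE trig ?oppr0.
by move=> i; rewrite mulmxN mulNmx mxE diag.
Qed.

Lemma trig_diag_eigenvalue N (A : 'M[F]_N) d c :
  trig_diag A d -> eigenvalue A c -> exists i, d i = c.
Proof.
move=> /char_poly_trig_diag charA; rewrite eigenvalue_root_char charA.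
rewrite -(big_map d predT (fun a => 'X - a%:P)) root_prod_XsubC.
by case/mapP => i _ ->; exists i.
Qed.

Lemma trig_diag0 N : trig_diag (0 : 'M[F]_N) (fun _ => 0).
Proof.
by exists 1%:M, 1%:M; rewrite mul1mx mulmx1 mulmx0; split=> // [|i];
  rewrite ?mx0_is_trig ?mxE.
Qed.

Lemma trig_diag_cast a b (e : a = b) (A : 'M[F]_a) d : trig_diag A d ->
  trig_diag (castmx (e, e) A) (fun j => d (cast_ord (esym e) j)).
Proof.
by case: b / e; rewrite castmx_id => -[P [Pi [PiP trig diag]]]; exists P, Pi;
  split=> // i; rewrite diag cast_ord_id.
Qed.

Lemma tensmx11 p q : (1%:M : 'M[F]_p) *t (1%:M : 'M[F]_q) = 1%:M.
Proof.
apply/matrixP=> i j.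
case: (mxtens_indexP i)=> i1 i2; case: (mxtens_indexP j)=> j1 j2.
rewrite tensmxE !mxE -natrM (inj_eq (can_inj (@mxtens_indexK _ _))) xpair_eqE.
by case: (i1 == j1); case: (i2 == j2).
Qed.

Lemma mxtens_index_ltP p q (i1 j1 : 'I_p) (i2 j2 : 'I_q) :
  (mxtens_index (i1, i2) < mxtens_index (j1, j2))%N ->
  (i1 < j1)%N \/ i1 = j1 /\ (i2 < j2)%N.
Proof.
rewrite /= => lt_ij; have := ltn_ord i2; have := ltn_ord j2.
case: (ltngtP i1 j1) => [lt1|lt_ji|/val_inj eq1]; first by left.
  have : (j1.+1 * q <= i1 * q)%N by rewrite leq_mul2r lt_ji orbT.
  rewrite mulSn; lia.
by right; subst; split=> //; lia.
Qed.

Lemma trig_diag_tenssum p q (A : 'M[F]_p) (B : 'M[F]_q) f g :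
  trig_diag A f -> trig_diag B g ->
  trig_diag (tenssum_ring A B)
    (fun j => f (mxtens_unindex j).1 + g (mxtens_unindex j).2).
Proof.
case=> P [Pi [PiP trA dgA]]; case=> Q [Qi [QiQ trB dgB]].
exists (P *t Q), (Pi *t Qi).
have -> : (P *t Q) *m tenssum_ring A B *m (Pi *t Qi) =
    (P *m A *m Pi) *t 1%:M + 1%:M *t (Q *m B *m Qi).
  by rewrite mulmxDr mulmxDl !tensmx_mul !mulmx1 (mulmx1C PiP) (mulmx1C QiQ).
rewrite tensmx_mul PiP QiQ tensmx11.
move: (P *m A *m Pi) (Q *m B *m Qi) trA dgA trB dgB => TA TB trA dgA trB dgB.
split=> //.
  apply/is_trig_mxP => i j.
  case: (mxtens_indexP i)=> i1 i2; case: (mxtens_indexP j)=> j1 j2.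
  rewrite !mxE !mxtens_indexK /= => /mxtens_index_ltP [lt1|[-> lt2]].
    by rewrite (is_trig_mxP trA) // [i1 == j1](ltn_eqF lt1) !mul0r add0r.
  by rewrite (is_trig_mxP trB) // [i2 == j2](ltn_eqF lt2) !mulr0 addr0.
move=> i; case: (mxtens_indexP i)=> i1 i2.
by rewrite !mxE !mxtens_indexK /= !eqxx mulr1 mul1r dgA dgB.
Qed.

Lemma trig_diag_tsum m k (A : 'I_k -> 'M[F]_m) (f : 'I_k -> 'I_m -> F) :
  (forall i, trig_diag (A i) (f i)) ->
  exists2 lam : 'I_(m ^ k) -> F, trig_diag (tsum_ring A) lam &
    forall G : F -> {poly F}, \prod_(j < m ^ k) G (lam j)
      = \prod_(t : {ffun 'I_k -> 'I_m}) G (\sum_(i < k) f i (t i)).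
Proof.
elim: k A f => [|k IHk] A f trigA.
  exists (fun _ => 0).
    exact: (trig_diag_cast (esym (expn0 m)) (trig_diag0 1)).
  move=> G; under [RHS]eq_bigr do rewrite big_ord0.
  by rewrite !big_const card_ffun !card_ord !expn0.
have [lam trig_lam prod_lam] := IHk _ _ (fun i => trigA (lift ord0 i)).
eexists; first exact: trig_diag_cast (trig_diag_tenssum (trigA ord0) trig_lam).
move=> G; rewrite (big_cast_ord _ (esym (expnS m k))).
under eq_bigr do rewrite cast_ordK.
rewrite big_mxtens_index big_ffun_cons; apply: eq_bigr => a _.
under eq_bigr do rewrite mxtens_indexK /=.
rewrite (prod_lam (fun v => G (f ord0 a + v))); apply: eq_bigr => t _.
rewrite big_ord_recl /ffun_cons ffunE unlift_none; congr (G (_ + _)).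
by apply: eq_bigr => i _; rewrite ffunE liftK.
Qed.

Lemma char_poly_opp_tsum m k (A : 'I_k -> 'M[F]_m) (f : 'I_k -> 'I_m -> F) :
  (forall i, trig_diag (A i) (f i)) ->
  char_poly (- tsum_ring A)
    = \prod_(t : {ffun 'I_k -> 'I_m}) ('X + (\sum_(i < k) f i (t i))%:P).
Proof.
move=> /trig_diag_tsum [lam /trig_diagN/char_poly_trig_diag ->].
move=> /(_ (fun v => 'X - (- v)%:P)) ->.
by apply: eq_bigr => t _; rewrite polyCN opprK.
Qed.

End Trigonalization.

Definition mx2 (T : pzRingType) (a b c d : T) : 'M[T]_2 :=
  \matrix_(i, j) if i == ord0 then (if j == ord0 then a else b)
                 else (if j == ord0 then c else d).

Lemma ord2P (i : 'I_2) : i = ord0 \/ i = ord_max.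
Proof. by case: i => -[|[|//]] lti; [left|right]; apply: val_inj. Qed.

Lemma mul_mx2 (T : comPzRingType) (a b c d a' b' c' d' : T) :
  mx2 a b c d *m mx2 a' b' c' d' =
  mx2 (a * a' + b * c') (a * b' + b * d') (c * a' + d * c') (c * b' + d * d').
Proof.
apply/matrixP => i j; rewrite !mxE !big_ord_recl big_ord0 !mxE /=.
by case: (ord2P i) => ->; case: (ord2P j) => -> /=; rewrite addr0.
Qed.

Lemma mx2_1 (T : pzRingType) : mx2 (1 : T) 0 0 1 = 1%:M.
Proof.
by apply/matrixP => i j; rewrite !mxE; case: (ord2P i) => ->; case: (ord2P j) => ->.
Qed.

Lemma map_mx2 (aT rT : pzRingType) (f : {rmorphism aT -> rT}) (a b c d : aT) :
  map_mx f (mx2 a b c d) = mx2 (f a) (f b) (f c) (f d).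
Proof.
by apply/matrixP => i j; rewrite !mxE; case: (ord2P i) => ->; case: (ord2P j) => ->.
Qed.

Section PlusMinus.
Variable F : fieldType.

Definition pnk_poly k (r : 'I_k -> F) : {poly F} :=
  \prod_(s : {ffun 'I_k -> bool}) ('X - (\sum_(i < k) (-1) ^+ s i * r i)%:P).

Definition pm_trig m (A : 'M[F]_m) (r : F) :=
  exists f : 'I_m -> F,
    trig_diag A f /\ exists a b, [/\ a != b, f a = r & f b = - r].

Lemma pm_trig0 m : pm_trig (0 : 'M[F]_m.+2) 0.
Proof.
exists (fun _ => 0); split; first exact: trig_diag0.
by exists ord0, (lift ord0 ord0); rewrite oppr0.
Qed.

Lemma trig_diag_mx2 (r : F) :
  trig_diag (mx2 0 (r ^+ 2) 1 0) (fun a => if a == ord0 then - r else r).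
Proof.
have conjW : mx2 1 (- r) 0 1 *m mx2 0 (r ^+ 2) 1 0 *m mx2 1 r 0 1 = mx2 (- r) 0 1 r.
  by rewrite !mul_mx2; congr mx2; ring.
exists (mx2 1 (- r) 0 1), (mx2 1 r 0 1); rewrite conjW; split.
- by rewrite mul_mx2 -mx2_1; congr mx2; ring.
- by apply/is_trig_mxP => i j; rewrite !mxE; case: (ord2P i) => ->; case: (ord2P j) => ->.
- by move=> i; rewrite !mxE; case: (ord2P i) => ->.
Qed.

Lemma pnk_poly_factorE k (r : 'I_k -> F) (s : {ffun 'I_k -> bool}) (g : 'I_k -> F) :
  (forall i, g i = if s i then r i else - r i) ->
  'X + (\sum_(i < k) g i)%:P = 'X - (\sum_(i < k) (-1) ^+ s i * r i)%:P.
Proof.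
move=> gE; rewrite -polyCN -sumrN; congr ('X + _%:P); apply: eq_bigr => i _.
by rewrite gE; case: (s i); rewrite ?expr1 ?mulN1r ?mul1r ?opprK.
Qed.

Lemma char_poly_opp_tsum_mx2 k (r : 'I_k -> F) :
  char_poly (- tsum_ring (fun i => mx2 0 (r i ^+ 2) 1 0)) = pnk_poly r.
Proof.
rewrite (char_poly_opp_tsum (fun i => trig_diag_mx2 (r i))).
rewrite (reindex (fun s : {ffun 'I_k -> bool} =>
  [ffun i => if s i then ord_max else ord0])) /=.
  apply: eq_bigr => s _; apply: pnk_poly_factorE => i.
  by rewrite ffunE; case: (s i).
exists (fun t : {ffun 'I_k -> 'I_2} => [ffun i => t i != ord0]) => [s _|t _];
  apply/ffunP => i; rewrite !ffunE; first by case: (s i).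
by case: (ord2P (t i)) => ->.
Qed.

Lemma dvdp_prod_inj (S T : finType) (h : S -> T) (G : T -> {poly F}) :
  injective h -> \prod_(s : S) G (h s) %| \prod_(t : T) G t.
Proof.
move=> inj_h; rewrite (bigID (mem [set h s | s in S])) /= big_imset /=.
  exact: dvdp_mulr.
by move=> s1 s2 _ _ /inj_h.
Qed.

Lemma pnk_poly_dvd_char_poly m k (A : 'I_k -> 'M[F]_m) (r : 'I_k -> F) :
  (forall i, pm_trig (A i) (r i)) -> pnk_poly r %| char_poly (- tsum_ring A).
Proof.
move=> /fin_all_exists [f fP].
have [a /fin_all_exists [b abP]] := fin_all_exists (fun i => (fP i).2).
rewrite (char_poly_opp_tsum (fun i => (fP i).1)).
pose h (s : {ffun 'I_k -> bool}) := [ffun i => if s i then a i else b i].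
have -> : pnk_poly r = \prod_s ('X + (\sum_(i < k) f i (h s i))%:P).
  apply: eq_bigr => s _; apply/esym/pnk_poly_factorE => i.
  by rewrite ffunE; case: (abP i) => _ fa fb; case: (s i); rewrite /= ?fa ?fb.
apply: (@dvdp_prod_inj _ _ h (fun t => 'X + (\sum_(i < k) f i (t i))%:P)).
move=> s1 s2 /ffunP eq_h; apply/ffunP => i; have := eq_h i; rewrite !ffunE.
by case: (abP i) => neq_ab _ _; case: (s1 i); case: (s2 i) => // eq_ab;
  rewrite eq_ab eqxx in neq_ab.
Qed.
End PlusMinus.

Lemma horner_char_poly (T : comNzRingType) N (B : 'M[T]_N) d :
  (char_poly B).[d] = \det (d%:M - B).
Proof.
rewrite -horner_evalE /char_poly -det_map_mx; congr (\det _).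
apply/matrixP => i j; rewrite !mxE /= horner_evalE.
by rewrite hornerD hornerN hornerC hornerMn hornerX.
Qed.

Lemma map_rdivpK (S : comNzRingType) (K : fieldType) (f : {rmorphism S -> K})
    (p q : {poly S}) :
  q \is monic -> map_poly f q %| map_poly f p ->
  map_poly f (rdivp p q) * map_poly f q = map_poly f p.
Proof.
move=> monq dvd_fq_fp.
have fpE := congr1 (map_poly f) (Pdiv.RingMonic.rdivp_eq monq p).
rewrite rmorphD rmorphM /= in fpE.
suff fr0 : map_poly f (rmodp p q) = 0 by rewrite fpE fr0 addr0.
have size_fq : size (map_poly f q) = size q.
  by apply: size_map_poly_id0; rewrite (monicP monq) rmorph1 oner_neq0.
rewrite (modpP fpE) ?(modp_eq0 dvd_fq_fp) // size_fq.
exact: leq_ltn_trans (size_poly _ _) (ltn_rmodpN0 _ (monic_neq0 monq)).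
Qed.

Section RankTwo.
Variables (F : numFieldType) (m : nat) (A : 'M[F]_m) (r : F).
Hypotheses (r_neq0 : r != 0) (rankA : (\rank A <= 2)%N).
Hypotheses (eig_r : eigenvalue A r) (eig_Nr : eigenvalue A (- r)).

Let r_neqN : r != - r.
Proof. by rewrite -addr_eq0 -mulr2n mulrn_eq0 negb_or r_neq0. Qed.

Let uniq_pm0 : uniq [:: r; - r; 0].
Proof. by rewrite /= !inE !negb_or r_neqN r_neq0 oppr_eq0 r_neq0. Qed.

Lemma eigenspace_pm0_full : (\sum_(c <- [:: r; - r; 0]) eigenspace A c :=: 1%:M)%MS.
Proof.
rewrite (big_nth 0) big_mkord.
have inj_pm0 : {in predT &, injective (fun i : 'I_3 => [:: r; - r; 0]`_i)}.
  by move=> i j _ _ /eqP; rewrite nth_uniq // => /eqP /val_inj.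
apply/eqmxP/andP; split; first exact: submx1.
rewrite sub1mx -col_leq_rank (mxdirectP (mxdirect_sum_eigenspace A inj_pm0)) /=.
rewrite !big_ord_recl big_ord0 /=.
have rank_r : (0 < \rank (eigenspace A r))%N by rewrite lt0n mxrank_eq0.
have rank_Nr : (0 < \rank (eigenspace A (- r)))%N by rewrite lt0n mxrank_eq0.
have rank_0 : \rank (eigenspace A 0) = (m - \rank A)%N.
  by rewrite /eigenspace raddf0 subr0 mxrank_ker.
rewrite rank_0; lia.
Qed.

Lemma pm_trig_rank2 : pm_trig A r.
Proof.
have [P unitP] : diagonalizable A.
  by apply/diagonalizablePeigen; exists [:: r; - r; 0]; last exact: eigenspace_pm0_full.
rewrite /similar_to conjumx // => diagA.
have trigA : trig_diag A (fun i => (P *m A *m invmx P) i i).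
  by exists P, (invmx P); split=> //; [exact: mulVmx | exact: is_diag_mx_is_trig].
exists (fun i => (P *m A *m invmx P) i i); split=> //.
have [a fa] := trig_diag_eigenvalue trigA eig_r.
have [b fb] := trig_diag_eigenvalue trigA eig_Nr.
exists a, b; split=> //; apply/eqP => eq_ab.
by move: r_neqN; rewrite -{1}fa eq_ab fb eqxx.
Qed.

Lemma mx_cube_rank2 : A *m A *m A = r ^+ 2 *: A.
Proof.
apply/eqP; rewrite -subr_eq0 -(mul1mx (_ - _)) -sub_kermx -eigenspace_pm0_full.
have sub_ker c : c ^+ 3 = r ^+ 2 * c ->
    (eigenspace A c <= kermx (A *m A *m A - r ^+ 2 *: A))%MS.
  move=> c3; rewrite sub_kermx mulmxBr !mulmxA.
  have /eigenspaceP EA := submx_refl (eigenspace A c).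
  rewrite EA -!scalemxAl EA -scalemxAl EA -scalemxAr EA !scalerA -scalerBl.
  by rewrite -expr2 -exprSr c3 subrr scale0r.
rewrite !big_cons big_nil !addsmx_sub sub0mx !sub_ker ?andbT //; ring.
Qed.

End RankTwo.

Lemma poly_eq0_off0 (T : numDomainType) (p : {poly T}) :
  (forall t, t != 0 -> p.[t] = 0) -> p = 0.
Proof.
move=> p0; apply: (@roots_geq_poly_eq0 _ p [seq i.+1%:R | i <- iota 0 (size p)]).
- by apply/allP => _ /mapP [i _ ->]; apply/rootP/p0; rewrite pnatr_eq0.
- by rewrite map_inj_uniq ?iota_uniq // => i j /eqP; rewrite eqr_nat eqSS => /eqP.
- by rewrite size_map size_iota.
Qed.

Lemma cube_eq0_of_line (T : numDomainType) m (B C : 'M[T]_m) :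
  (forall t, t != 0 ->
     (B + t *: C) *m (B + t *: C) *m (B + t *: C) = t ^+ 2 *: (B + t *: C)) ->
  B *m B *m B = 0.
Proof.
move=> cube_line.
pose M : 'M[{poly T}]_m := map_mx polyC B + 'X *: map_mx polyC C.
have evalM t : map_mx (horner_eval t) M = B + t *: C.
  by apply/matrixP => a b; rewrite !mxE /= horner_evalE hornerD hornerM hornerX !hornerC.
have evalG t : map_mx (horner_eval t) (M *m M *m M - 'X ^+ 2 *: M)
    = (B + t *: C) *m (B + t *: C) *m (B + t *: C) - t ^+ 2 *: (B + t *: C).
  by rewrite map_mxB !map_mxM map_mxZ evalM rmorphXn /= horner_evalE hornerX.
have G0 : M *m M *m M - 'X ^+ 2 *: M = 0.
  apply/matrixP => a b; rewrite [RHS]mxE; apply: poly_eq0_off0 => t t_neq0.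
  have := congr1 (fun N : 'M[T]_m => N a b) (evalG t); rewrite mxE /= horner_evalE => ->.
  by rewrite cube_line // subrr mxE.
by have := evalG 0; rewrite G0 map_mx0 scale0r addr0 expr0n scale0r subr0.
Qed.

Lemma mulmx_trmx_eq0 (T : realDomainType) p q (M : 'M[T]_(p, q)) :
  M *m M^T = 0 -> M = 0.
Proof.
move=> MMt0; apply/matrixP => i j; rewrite mxE.
have := congr1 (fun N : 'M[T]_p => N i i) MMt0; rewrite !mxE /=.
under eq_bigr do rewrite mxE -expr2.
move=> /psumr_eq0P sq0; apply/eqP; rewrite -sqrf_eq0 sq0 // => k _; exact: sqr_ge0.
Qed.

Lemma symmx_cube_eq0 (T : realDomainType) m (B : 'M[T]_m) :
  B^T = B -> B *m B *m B = 0 -> B = 0.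
Proof.
move=> symB cubeB.
have sqB : B *m B = 0.
  by apply: mulmx_trmx_eq0; rewrite trmx_mul symB !mulmxA cubeB mul0mx.
by apply: mulmx_trmx_eq0; rewrite symB.
Qed.

Section RealClosed.
Variable R : rcfType.

Lemma sqr_edist n (u x : 'rV[R]_n) :
  edist u x ^+ 2 = \sum_(j < n) (u 0 j - x 0 j) ^+ 2.
Proof. by rewrite sqr_sqrtr // sumr_ge0 // => j _; apply: sqr_ge0. Qed.

Lemma edist_eq0 n (u x : 'rV[R]_n) : (edist u x == 0) = (x == u).
Proof.
rewrite -sqrf_eq0 sqr_edist psumr_eq0 => [|j _]; last exact: sqr_ge0.
apply/idP/idP => [/allP sq0|/eqP ->].
  apply/eqP/rowP => j; have := sq0 j (mem_index_enum j).
  by rewrite sqrf_eq0 subr_eq0 eq_sym => /eqP.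
by apply/allP => j _; rewrite subrr expr2 mulr0 eqxx.
Qed.

Lemma horner_pnk_poly n k (u : 'I_k -> 'rV[R]_n) d x :
  (pnk_poly (fun i => edist (u i) x)).[d] = pnk u d x.
Proof.
rewrite horner_prod; apply: eq_bigr => s _.
by rewrite hornerD hornerN hornerC hornerX.
Qed.

Definition mpoly_of_poly n (p : {poly {mpoly R[n]}}) : {mpoly R[n.+1]} :=
  (map_poly (fun c => c \mPo [tuple 'X_(lift ord0 j) | j < n]) p).['X_ord0].

Lemma meval_mpoly_of_poly n (p : {poly {mpoly R[n]}}) d (x : 'rV[R]_n) :
  (mpoly_of_poly p).@[dx_pt d x] = (map_poly (meval (fun j => x 0 j)) p).[d].
Proof.
rewrite -horner_map /= mevalXU /dx_pt unlift_none -map_poly_comp.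
congr (_.[_]); apply: eq_map_poly => c /=.
rewrite comp_mpoly_meval; apply: meval_eq => j.
by rewrite tnth_mktuple mevalXU liftK.
Qed.

Definition affmx_mpoly n m (U0 : 'M[R]_m) (C : 'I_n -> 'M[R]_m) : 'M[{mpoly R[n]}]_m :=
  map_mx (@mpolyC n R) U0 + \sum_(j < n) 'X_j *: map_mx (@mpolyC n R) (C j).

Lemma meval_affmx_mpoly n m (U0 : 'M[R]_m) (C : 'I_n -> 'M[R]_m) (x : 'rV[R]_n) :
  map_mx (meval (fun j => x 0 j)) (affmx_mpoly U0 C) = affmx U0 C x.
Proof.
apply/matrixP => a b; rewrite !mxE !summxE mevalD raddf_sum /= mevalC.
by congr (_ + _); apply: eq_bigr => j _; rewrite !mxE mevalM mevalXU mevalC.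
Qed.

Definition sqdist_mpoly n (u : 'rV[R]_n) : {mpoly R[n]} :=
  \sum_(j < n) ('X_j - (u 0 j)%:MP) ^+ 2.

Lemma meval_sqdist_mpoly n (u x : 'rV[R]_n) :
  meval (fun j => x 0 j) (sqdist_mpoly u) = edist u x ^+ 2.
Proof.
rewrite sqr_edist rmorph_sum; apply: eq_bigr => j _.
by rewrite rmorphXn rmorphB /= mevalXU mevalC -sqrrN opprB.
Qed.

Lemma pnk_divides_det_of_pm_trig n m k (u : 'I_k -> 'rV[R]_n)
    (U0 : 'I_k -> 'M[R]_m) (C : 'I_k -> 'I_n -> 'M[R]_m) :
  (forall i x, pm_trig (affmx (U0 i) (C i) x) (edist (u i) x)) ->
  pnk_divides_det u (fun i x => affmx (U0 i) (C i) x).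
Proof.
move=> pmU.
pose ev (x : 'rV[R]_n) := meval (fun j => x 0 j).
pose D := char_poly (- tsum_ring (fun i => affmx_mpoly (U0 i) (C i))).
pose P := char_poly (- tsum_ring (fun i => mx2 0 (sqdist_mpoly (u i)) 1 0)).
have evD x : map_poly (ev x) D = char_poly (- tsum (fun i => affmx (U0 i) (C i) x)).
  rewrite map_char_poly map_mxN map_tsum_ring -tsum_ringE.
  by congr (char_poly (- _)); apply: eq_tsum_ring => i; rewrite meval_affmx_mpoly.
have evP x : map_poly (ev x) P = pnk_poly (fun i => edist (u i) x).
  rewrite map_char_poly map_mxN map_tsum_ring -char_poly_opp_tsum_mx2.
  congr (char_poly (- _)); apply: eq_tsum_ring => i.
  by rewrite map_mx2 rmorph0 rmorph1; congr mx2; apply: meval_sqdist_mpoly.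
have monP : P \is monic by apply: char_poly_monic.
exists (mpoly_of_poly P), (mpoly_of_poly (rdivp D P)); split=> d x.
  by rewrite meval_mpoly_of_poly evP horner_pnk_poly.
rewrite mevalM !meval_mpoly_of_poly mulrC -hornerM map_rdivpK //.
  by rewrite evD horner_char_poly opprK.
by rewrite evD evP pnk_poly_dvd_char_poly.
Qed.

Lemma affmx_line n m (U0 : 'M[R]_m) (C : 'I_n.+1 -> 'M[R]_m) (u : 'rV[R]_n.+1) t :
  affmx U0 C (u + t *: delta_mx 0 ord0) = affmx U0 C u + t *: C ord0.
Proof.
rewrite /affmx -addrA; congr (_ + _).
under eq_bigr do rewrite !mxE eqxx /= scalerDl.
rewrite big_split /=; congr (_ + _).
rewrite (bigD1 ord0) //= mulr1 big1 ?addr0 // => j /negbTE ->.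
by rewrite mulr0 scale0r.
Qed.

Lemma edist_line n (u : 'rV[R]_n.+1) t : edist u (u + t *: delta_mx 0 ord0) ^+ 2 = t ^+ 2.
Proof.
rewrite sqr_edist (bigD1 ord0) //= big1 => [|j /negbTE j_neq0]; rewrite !mxE ?eqxx ?j_neq0 /=.
  by rewrite addr0 mulr1 opprD addrA subrr sub0r sqrrN.
by rewrite mulr0 addr0 subrr expr0n.
Qed.

Lemma affmx_center_eq0 n m (U0 : 'M[R]_m) (C : 'I_n.+1 -> 'M[R]_m) (u : 'rV[R]_n.+1) :
  (affmx U0 C u)^T = affmx U0 C u ->
  (forall x, x != u -> affmx U0 C x *m affmx U0 C x *m affmx U0 C x
                       = edist u x ^+ 2 *: affmx U0 C x) ->
  affmx U0 C u = 0.
Proof.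
move=> symA cubeA; apply: symmx_cube_eq0 symA _.
apply: (cube_eq0_of_line (C := C ord0)) => t t_neq0.
rewrite -affmx_line cubeA ?edist_line // -edist_eq0.
by rewrite -sqrf_eq0 edist_line sqrf_eq0.
Qed.

Lemma eq_pnk_divides_det n m k (u : 'I_k -> 'rV[R]_n) (U V : 'I_k -> 'rV[R]_n -> 'M[R]_m) :
  (forall i x, U i x = V i x) -> pnk_divides_det u U -> pnk_divides_det u V.
Proof.
move=> eqUV [P [Q [PE PQE]]]; exists P, Q; split=> // d x.
by rewrite PQE -!tsum_ringE (eq_tsum_ring (fun i => eqUV i x)).
Qed.

Lemma pnk_divides_det_rank2 n m k (u : 'I_k -> 'rV[R]_n.+1)
    (U0 : 'I_k -> 'M[R]_m.+2) (C : 'I_k -> 'I_n.+1 -> 'M[R]_m.+2) :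
  (forall i x, (affmx (U0 i) (C i) x)^T = affmx (U0 i) (C i) x) ->
  (forall i x, x != u i ->
     [/\ (\rank (affmx (U0 i) (C i) x) <= 2)%N,
         eigenvalue (affmx (U0 i) (C i) x) (edist (u i) x) &
         eigenvalue (affmx (U0 i) (C i) x) (- edist (u i) x)]) ->
  pnk_divides_det u (fun i x => affmx (U0 i) (C i) x).
Proof.
move=> symU specU; apply: pnk_divides_det_of_pm_trig => i x.
have [->|x_neq] := eqVneq x (u i); last first.
  have [rankU eig eigN] := specU i x x_neq.
  by apply: pm_trig_rank2; rewrite ?edist_eq0.
have -> : affmx (U0 i) (C i) (u i) = 0.
  apply: affmx_center_eq0 (symU i (u i)) _ => y y_neq.
  have [rankU eig eigN] := specU i y y_neq.
  by apply: mx_cube_rank2; rewrite ?edist_eq0.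
have /eqP -> : edist (u i) (u i) == 0 by rewrite edist_eq0.
exact: pm_trig0.
Qed.

End RealClosed.

Section Arrow.
Variable R : rcfType.

Lemma arrowmx_affmx n (u x : 'rV[R]_n) :
  arrowmx u x = affmx (arrowmx u 0) (fun j => arrowmx 0 (delta_mx 0 j)) x.
Proof.
have coord j' : \sum_(j < n) x 0 j * (delta_mx 0 j : 'rV[R]_n) 0 j' = x 0 j'.
  by rewrite {2}[x]row_sum_delta summxE; apply: eq_bigr => j _; rewrite !mxE.
apply/matrixP => a b; rewrite /affmx !mxE summxE.
under eq_bigr do rewrite !mxE.
case: (unlift ord0 a) => [a'|]; case: (unlift ord0 b) => [b'|] /=;
  under eq_bigr do rewrite ?[(0 : 'rV[R]_n) 0 _]mxE ?subr0 ?mulr0;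
  by rewrite ?coord ?big1 ?mxE ?sub0r ?add0r ?addr0 // [RHS]addrC.
Qed.

Lemma trmx_arrowmx n (u x : 'rV[R]_n) : (arrowmx u x)^T = arrowmx u x.
Proof.
by apply/matrixP => a b; rewrite !mxE; case: (unlift ord0 a); case: (unlift ord0 b).
Qed.

Lemma rank_arrowmx n (u x : 'rV[R]_n) : (\rank (arrowmx u x) <= 2)%N.
Proof.
pose e0 : 'rV[R]_n.+1 := delta_mx 0 ord0.
pose w : 'rV[R]_n.+1 := \row_a if unlift ord0 a is Some j then x 0 j - u 0 j else 0.
have -> : arrowmx u x = e0^T *m w + w^T *m e0.
  apply/matrixP => a b; rewrite !mxE !big_ord1 !mxE.
  case: unliftP => [a' ->|->]; case: unliftP => [b' ->|->];
  by rewrite ?liftK ?unlift_none ?eqxx ?(negbTE (neq_lift ord0 _)) /=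
    ?mul0r ?mulr0 ?mulr1 ?mul1r ?addr0 ?add0r.
have rank1 (v v' : 'rV[R]_n.+1) : (\rank (v^T *m v') <= 1)%N.
  exact: leq_trans (mxrankM_maxl _ _) (rank_leq_col _).
exact: leq_trans (mxrank_add _ _) (leq_add (rank1 _ _) (rank1 _ _)).
Qed.

Lemma eigenvalue_arrowmx n (u x : 'rV[R]_n) c :
  c ^+ 2 = edist u x ^+ 2 -> c != 0 -> eigenvalue (arrowmx u x) c.
Proof.
move=> c2 c_neq0; apply/eigenvalueP.
pose v : 'rV[R]_n.+1 := \row_a if unlift ord0 a is Some j then x 0 j - u 0 j else c.
exists v; last first.
  apply: contra c_neq0 => /eqP /rowP /(_ ord0).
  by rewrite !mxE unlift_none => ->.
apply/rowP => b; rewrite !mxE big_ord_recl !mxE unlift_none.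
under eq_bigr do rewrite !mxE liftK.
case: unliftP => [b' _|_]; rewrite ?liftK ?unlift_none.
  by rewrite big1 ?addr0 => [|j _]; [ring | exact: mulr0].
rewrite mulr0 add0r -expr2 c2 sqr_edist.
by apply: eq_bigr => j _; rewrite -expr2 -sqrrN opprB.
Qed.

End Arrow.

Theorem mainTheorem9 (R : rcfType) :
  (forall (n m k : nat) (u : 'I_k -> 'rV[R]_n)
          (U0 : 'I_k -> 'M[R]_m) (C : 'I_k -> 'I_n -> 'M[R]_m),
     (1 <= n)%N -> (2 <= m)%N -> (1 <= k)%N ->
     (forall i x, (affmx (U0 i) (C i) x)^T = affmx (U0 i) (C i) x) ->
     (forall i x, x != u i ->
        [/\ \rank (affmx (U0 i) (C i) x) = 2%N,
            eigenvalue (affmx (U0 i) (C i) x) (edist (u i) x) &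
            eigenvalue (affmx (U0 i) (C i) x) (- edist (u i) x)]) ->
     pnk_divides_det u (fun i x => affmx (U0 i) (C i) x))
  /\
  (forall (n k : nat) (u : 'I_k -> 'rV[R]_n),
     (1 <= n)%N -> (1 <= k)%N ->
     pnk_divides_det u (fun i x => arrowmx (u i) x)).
Proof.
split=> [[//|n] [//|[//|m]] k u U0 C _ _ _ symU specU|[//|n] k u _ _].
  apply: pnk_divides_det_rank2 => // i x /(specU i x) [rankU eig eigN].
  by rewrite rankU.
apply: (@eq_pnk_divides_det _ _ _ _ _
  (fun i => affmx (arrowmx (u i) 0) (fun j => arrowmx 0 (delta_mx 0 j)))).
  by move=> i x; rewrite -arrowmx_affmx.
apply: pnk_divides_det_rank2 => i x; rewrite -arrowmx_affmx ?trmx_arrowmx // => x_neq.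
have r_neq0 : edist (u i) x != 0 by rewrite edist_eq0.
by split; rewrite ?rank_arrowmx // eigenvalue_arrowmx ?sqrrN ?oppr_eq0.
Qed.
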